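(* Let $\nu>0$, $v_0>0$ and $w_0\in\mathbb{R}\setminus\{0\}$, and define for $t\ge0$ $$\omega_{-1}(t)=\frac{w_0e^{\nu t}}{\left(1-\frac{w_0}{1+v_0}t+\frac{e^{\nu t}-1}{2}(1+v_0)\right)^2},\qquad v_c(t)=\frac{-1+\frac{w_0}{1+v_0}t+\frac{e^{\nu t}+1}{2}(1+v_0)}{1-\frac{w_0}{1+v_0}t+\frac{e^{\nu t}-1}{2}(1+v_0)},$$ which solves $\frac{d\omega_{-1}}{dt}=-\nu v_c\omega_{-1}+\frac{2\omega_{-1}^2}{1+v_c}$, $\frac{dv_c}{dt}=\omega_{-1}+\frac{\nu}{2}(1-v_c^2)$ with $v_c(0)=v_0$, $\omega_{-1}(0)=w_0$. Let $\omega(x,0)=\omega_-(x,0)+\overline{\omega_-(\bar x,0)}$ with $\omega_-(x,0)=w_0\left[\frac{1}{\tan(x/2)-\mathrm{i}v_0}-\frac{1}{-\mathrm{i}-\mathrm{i}v_0}\right]$. Suppose collapse occurs, i.e. there is a finite $t_c>0$ such that $v_c(t)\in(0,\infty)$ for $t\in[0,t_c)$ and either $v_c(t)\to0$ or $v_c(t)\to+\infty$ as $t\to t_c^-$. Then $$\|\omega(\cdot,0)\|_{B_0}\ge2e\nu\quad\text{and}\quad \|\omega(\cdot,0)\|_{L^2}\ge\frac{2\sqrt{\pi}\,\nu}{\sqrt{M}},\qquad M=\max_{s\ge0}\left(e^{-2s}-(1-s)^2\right)$$ (so $\|\omega(\cdot,0)\|_{L^2}\gtrsim 8.81\,\nu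$).
   Context: This is the single complex-conjugate pole-pair solution of the generalized Constantin–Lax–Majda equation with $a=0$, $\sigma=1$, zero mean ($\omega_{av}=0$) and real data, on the circle. Norms: $\|f\|_{L^2}^2=\int_{-\pi}^{\pi}|f|^2dx$ and $\|f\|_{B_0}=\sum_{k\in\mathbb{Z}}|\hat f_k|$ with $\hat f_k=\frac{1}{2\pi}\int_{-\pi}^{\pi}f(x)e^{-\mathrm{i}kx}dx$; explicitly $\|\omega(\cdot,0)\|_{L^2}^2=\frac{4\pi w_0^2}{v_0(1+v_0)^2}$ and $\|\omega(\cdot,0)\|_{B_0}=\frac{|w_0|}{v_0}\left(\left|\frac{1-v_0}{1+v_0}\right|+1\right)$. *)

From Stdlib Require Import Reals.
From Coquelicot Require Import Coquelicot.
Open Scope R_scope.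

Definition clm_den (nu v0 w0 t : R) : R :=
  1 - w0 / (1 + v0) * t + (exp (nu * t) - 1) / 2 * (1 + v0).

Definition omega_m1 (nu v0 w0 t : R) : R :=
  w0 * exp (nu * t) / (clm_den nu v0 w0 t) ^ 2.

Definition v_c (nu v0 w0 t : R) : R :=
  (-1 + w0 / (1 + v0) * t + (exp (nu * t) + 1) / 2 * (1 + v0))
  / clm_den nu v0 w0 t.

(* Norms of the initial datum omega(.,0), via the explicit formulas
   given in the context:
   ||omega(.,0)||_{L^2}^2 = 4 pi w0^2 / (v0 (1+v0)^2),
   ||omega(.,0)||_{B_0}   = |w0|/v0 (|(1-v0)/(1+v0)| + 1). *)
Definition L2norm_omega0 (v0 w0 : R) : R :=
  sqrt (4 * PI * w0 ^ 2 / (v0 * (1 + v0) ^ 2)).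

Definition B0norm_omega0 (v0 w0 : R) : R :=
  Rabs w0 / v0 * (Rabs ((1 - v0) / (1 + v0)) + 1).

Definition M_fun (s : R) : R := exp (-2 * s) - (1 - s) ^ 2.

Definition collapses (nu v0 w0 : R) : Prop :=
  exists tc : R, 0 < tc /\
    (forall t, 0 <= t < tc -> 0 < v_c nu v0 w0 t) /\
    (filterlim (v_c nu v0 w0) (at_left tc) (locally 0)
     \/ filterlim (v_c nu v0 w0) (at_left tc) (Rbar_locally p_infty)).

From Stdlib Require Import Reals Lra Psatz.
From Coquelicot Require Import Coquelicot.
Open Scope R_scope.

(* Collapse at time [tc] means that the numerator or the denominator of [v_c]
   vanishes there. With [s = nu tc] and [E = e^s] this gives
   [|w0| tc / (1 + v0) = K := a + v0 b] for [{a, b} = {(E+1)/2, (E-1)/2}],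
   and both norms are multiples of [|w0| = nu (1 + v0) K / s]. The bounds
   then follow from [K >= min(1, v0) E], [K^2 >= v0 (E^2 - 1)] (AM-GM),
   [E >= e s], and [s^2 <= M (e^(2s) - 1)]. The last holds because
   [s^2 / (e^(2s) - 1)] is maximal at the positive root [u] of
   [(u - 1) e^(2u) + 1 = 0], with value [u (1 - u) = M_fun u <= M]. *)

Lemma deriv_pos_incr (f df : R -> R) (a b : R) : a < b ->
  (forall x, a <= x <= b -> derivable_pt_lim f x (df x)) ->
  (forall x, a < x < b -> 0 < df x) -> f a < f b.
Proof.
  intros Hab Hder Hpos.
  destruct (MVT_cor2 f df a b Hab Hder) as [c [Hc Hcab]].
  specialize (Hpos c Hcab). nra.
Qed.

Lemma deriv_neg_decr (f df : R -> R) (a b : R) : a < b ->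
  (forall x, a <= x <= b -> derivable_pt_lim f x (df x)) ->
  (forall x, a < x < b -> df x < 0) -> f b < f a.
Proof.
  intros Hab Hder Hneg.
  enough (- f a < - f b) by lra.
  apply (deriv_pos_incr (fun x => - f x) (fun x => - df x)); auto.
  - intros x Hx. apply derivable_pt_lim_opp, Hder, Hx.
  - intros x Hx. specialize (Hneg x Hx). lra.
Qed.

Lemma exp_double (x : R) : exp (2 * x) = exp x ^ 2.
Proof. replace (2 * x) with (x + x) by ring. rewrite exp_plus. ring. Qed.

Lemma exp_ge_e_mul (x : R) : exp 1 * x <= exp x.
Proof.
  replace (exp x) with (exp 1 * exp (x - 1))
    by (rewrite <- exp_plus; f_equal; ring).
  pose proof (exp_ineq1_le (x - 1)). pose proof (exp_pos 1). nra.
Qed.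

(* The common factor of [M_fun' t = -2 e^(-2t) crit t] and of
   [expm1_ratio' x = 2 crit x / x^3]. *)
Definition crit (x : R) : R := (x - 1) * exp (2 * x) + 1.

Lemma crit_deriv (x : R) : derivable_pt_lim crit x ((2 * x - 1) * exp (2 * x)).
Proof. apply is_derive_Reals. unfold crit. auto_derive; auto. ring. Qed.

Lemma crit_neg_small (x : R) : 0 < x <= 1/2 -> crit x < 0.
Proof.
  intros Hx. replace 0 with (crit 0) by (unfold crit; rewrite Rmult_0_r, exp_0; ring).
  apply (deriv_neg_decr crit (fun x => (2 * x - 1) * exp (2 * x))); try lra.
  - intros y _. apply crit_deriv.
  - intros y Hy. pose proof (exp_pos (2 * y)). nra.
Qed.

Lemma crit_incr (x y : R) : 1/2 <= x < y -> crit x < crit y.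
Proof.
  intros Hxy. apply (deriv_pos_incr crit (fun x => (2 * x - 1) * exp (2 * x))); try lra.
  - intros z _. apply crit_deriv.
  - intros z Hz. pose proof (exp_pos (2 * z)). nra.
Qed.

Lemma crit_root_exists : exists u, 1/2 < u < 1 /\ crit u = 0.
Proof.
  assert (Hhalf : crit (1/2) < 0) by (apply crit_neg_small; lra).
  assert (Hone : crit 1 = 1) by (unfold crit; ring).
  assert (Hcont : continuity crit).
  { intro x. apply derivable_continuous_pt. eexists. apply crit_deriv. }
  destruct (IVT crit (1/2) 1 Hcont ltac:(lra) Hhalf ltac:(lra)) as [u [Hu Hcu]].
  exists u. split; [|exact Hcu].
  split; [destruct (Req_dec u (1/2))|destruct (Req_dec u 1)]; subst; lra.
Qed.

Definition expm1_ratio (x : R) : R := (exp (2 * x) - 1) / x ^ 2.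

Lemma expm1_ratio_deriv (x : R) : 0 < x ->
  derivable_pt_lim expm1_ratio x (2 * crit x / x ^ 3).
Proof.
  intros Hx. apply is_derive_Reals. unfold expm1_ratio, crit. auto_derive.
  - nra.
  - field. lra.
Qed.

Section CriticalPoint.

Variable u : R.
Hypothesis u_gt_half : 1/2 < u.
Hypothesis crit_u : crit u = 0.

Lemma crit_neg_before (x : R) : 0 < x < u -> crit x < 0.
Proof.
  intros Hx. destruct (Rle_lt_dec x (1/2)).
  - apply crit_neg_small. lra.
  - rewrite <- crit_u. apply crit_incr. lra.
Qed.

Lemma crit_pos_after (x : R) : u < x -> 0 < crit x.
Proof. intros Hx. rewrite <- crit_u. apply crit_incr. lra. Qed.

Lemma expm1_ratio_min (s : R) : 0 < s -> expm1_ratio u <= expm1_ratio s.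
Proof.
  intros Hs. destruct (Rtotal_order s u) as [Hsu|[->|Hus]]; [left| lra |left].
  - apply (deriv_neg_decr expm1_ratio (fun x => 2 * crit x / x ^ 3)); auto.
    + intros x Hx. apply expm1_ratio_deriv. lra.
    + intros x Hx. pose proof (crit_neg_before x ltac:(lra)).
      assert (0 < / x ^ 3) by (apply Rinv_0_lt_compat, pow_lt; lra).
      unfold Rdiv. nra.
  - apply (deriv_pos_incr expm1_ratio (fun x => 2 * crit x / x ^ 3)); auto.
    + intros x Hx. apply expm1_ratio_deriv. lra.
    + intros x Hx. pose proof (crit_pos_after x ltac:(lra)).
      assert (0 < / x ^ 3) by (apply Rinv_0_lt_compat, pow_lt; lra).
      unfold Rdiv. nra.
Qed.

Lemma exp_crit : exp (2 * u) * (1 - u) = 1.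
Proof. unfold crit in crit_u. lra. Qed.

Lemma M_fun_crit : M_fun u = u * (1 - u).
Proof.
  assert (Hexp : exp (-2 * u) = 1 - u).
  { apply (Rmult_eq_reg_l (exp (2 * u))); [|apply Rgt_not_eq, exp_pos].
    rewrite <- exp_plus, exp_crit. replace (2 * u + -2 * u) with 0 by ring.
    apply exp_0. }
  unfold M_fun. rewrite Hexp. ring.
Qed.

Lemma M_fun_crit_mul_expm1_ratio : M_fun u * expm1_ratio u = 1.
Proof.
  rewrite M_fun_crit. unfold expm1_ratio.
  replace (u * (1 - u) * ((exp (2 * u) - 1) / u ^ 2))
    with ((exp (2 * u) * (1 - u) - (1 - u)) / u) by (field; lra).
  rewrite exp_crit. field. lra.
Qed.

End CriticalPoint.

Lemma sq_le_mul_expm1 (M : R) : (forall t, 0 <= t -> M_fun t <= M) ->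
  0 < M /\ forall s, 0 < s -> s ^ 2 <= M * (exp (2 * s) - 1).
Proof.
  intros Hmax.
  destruct crit_root_exists as [u [Hu Hcu]].
  assert (HMu : M_fun u = u * (1 - u)) by (apply M_fun_crit; lra).
  assert (HM : u * (1 - u) <= M) by (rewrite <- HMu; apply Hmax; lra).
  split; [nra|]. intros s Hs.
  assert (Hratio : 1 <= M * expm1_ratio s).
  { rewrite <- (M_fun_crit_mul_expm1_ratio u ltac:(lra) Hcu), HMu.
    apply Rmult_le_compat; [nra | | lra | apply expm1_ratio_min; lra].
    unfold expm1_ratio. apply Rle_mult_inv_pos; [|apply pow_lt; lra].
    pose proof (exp_ineq1 (2 * u)). lra. }
  unfold expm1_ratio in Hratio.
  replace (M * ((exp (2 * s) - 1) / s ^ 2))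
    with (M * (exp (2 * s) - 1) / s ^ 2) in Hratio by (field; lra).
  apply Rle_div_r in Hratio; [lra|]. apply pow_lt. lra.
Qed.

Lemma filterlim_locally_not_pinfty {T : Type} {F : (T -> Prop) -> Prop}
  {FF : ProperFilter F} (f : T -> R) (l : R) :
  filterlim f F (locally l) -> ~ filterlim f F (Rbar_locally p_infty).
Proof.
  intros Hl Hinf.
  assert (Hbelow : F (fun x => f x < l + 1)).
  { apply (Hl (fun y => y < l + 1)). exists (mkposreal 1 Rlt_0_1). intros y Hy.
    apply Rabs_lt_between' in Hy. simpl in Hy. lra. }
  assert (Habove : F (fun x => l + 1 < f x))
    by (apply (Hinf (fun y => l + 1 < y)); exists (l + 1); auto).
  destruct (filter_ex _ (filter_and _ _ Hbelow Habove)) as [x Hx]. lra.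
Qed.

Lemma continuous_no_collapse (f : R -> R) (c : R) : continuous f c -> f c <> 0 ->
  ~ (filterlim f (at_left c) (locally 0)
     \/ filterlim f (at_left c) (Rbar_locally p_infty)).
Proof.
  intros Hcont Hfc.
  assert (Hleft : filterlim f (at_left c) (locally (f c))).
  { eapply filterlim_filter_le_1; [apply filter_le_within | exact Hcont]. }
  intros [H0 | Hinf].
  - apply Hfc, (filterlim_locally_unique f _ _ Hleft H0).
  - exact (filterlim_locally_not_pinfty f (f c) Hleft Hinf).
Qed.

Lemma collapse_pole_cases (nu v0 w0 tc : R) :
  filterlim (v_c nu v0 w0) (at_left tc) (locally 0)
    \/ filterlim (v_c nu v0 w0) (at_left tc) (Rbar_locally p_infty) ->
  clm_den nu v0 w0 tc = 0
    \/ -1 + w0 / (1 + v0) * tc + (exp (nu * tc) + 1) / 2 * (1 + v0) = 0.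
Proof.
  intros Hlim.
  destruct (Req_dec (clm_den nu v0 w0 tc) 0) as [HD | HD]; [now left | right].
  destruct (Req_dec (-1 + w0 / (1 + v0) * tc + (exp (nu * tc) + 1) / 2 * (1 + v0)) 0)
    as [HN | HN]; [exact HN | exfalso].
  assert (Hder : ex_derive (v_c nu v0 w0) tc).
  { unfold v_c. auto_derive. repeat split; auto. unfold clm_den. auto_derive. auto. }
  apply (continuous_no_collapse (v_c nu v0 w0) tc); auto.
  - exact (ex_derive_continuous _ _ Hder).
  - unfold v_c. apply Rmult_integral_contrapositive_currified; auto.
    now apply Rinv_neq_0_compat.
Qed.

Lemma collapse_amplitude (nu v0 w0 : R) : 0 < nu -> 0 < v0 -> collapses nu v0 w0 ->
  exists tc, 0 < tc /\
    let E := exp (nu * tc) in let K := Rabs w0 * tc / (1 + v0) in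
    K = (E + 1) / 2 + v0 * (E - 1) / 2 \/ K = (E - 1) / 2 + v0 * (E + 1) / 2.
Proof.
  intros Hnu Hv0 [tc [Htc [_ Hlim]]]. exists tc. split; [exact Htc|]. intros E K.
  assert (HE : 1 < E) by (pose proof (exp_ineq1 (nu * tc)); unfold E; nra).
  destruct (collapse_pole_cases nu v0 w0 tc Hlim) as [HD | HN].
  - left. unfold clm_den in HD. fold E in HD.
    assert (Ha : w0 / (1 + v0) * tc = (E + 1) / 2 + v0 * (E - 1) / 2) by lra.
    assert (Hw : w0 * tc = (1 + v0) * ((E + 1) / 2 + v0 * (E - 1) / 2))
      by (rewrite <- Ha; field; lra).
    assert (0 < w0) by nra.
    unfold K. rewrite Rabs_pos_eq, Hw by lra. field. lra.
  - right. fold E in HN.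
    assert (Ha : w0 / (1 + v0) * tc = - ((E - 1) / 2 + v0 * (E + 1) / 2)) by lra.
    assert (Hw : w0 * tc = - ((1 + v0) * ((E - 1) / 2 + v0 * (E + 1) / 2)))
      by (rewrite Ropp_mult_distr_r, <- Ha; field; lra).
    assert (w0 < 0) by nra.
    unfold K. rewrite Rabs_left by lra.
    replace (- w0 * tc) with (- (w0 * tc)) by ring. rewrite Hw. field. lra.
Qed.

(* In both cases [K^2 - v0 (E^2 - 1) = (a - v0 b)^2] with [{a, b} = {(E+1)/2, (E-1)/2}]. *)
Lemma amplitude_bounds (v0 E K : R) : 0 < v0 -> 1 <= E ->
  K = (E + 1) / 2 + v0 * (E - 1) / 2 \/ K = (E - 1) / 2 + v0 * (E + 1) / 2 ->
  Rmin 1 v0 * E <= K /\ v0 * (E ^ 2 - 1) <= K ^ 2.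
Proof.
  intros Hv0 HE HK.
  pose proof (Rmin_l 1 v0). pose proof (Rmin_r 1 v0).
  set (m := Rmin 1 v0) in *.
  assert (0 <= (1 - m) * (E + 1)) by (apply Rmult_le_pos; lra).
  assert (0 <= (v0 - m) * (E - 1)) by (apply Rmult_le_pos; lra).
  assert (0 <= (1 - m) * (E - 1)) by (apply Rmult_le_pos; lra).
  assert (0 <= (v0 - m) * (E + 1)) by (apply Rmult_le_pos; lra).
  destruct HK as [-> | ->]; split; try lra.
  - pose proof (pow2_ge_0 ((E + 1) / 2 - v0 * (E - 1) / 2)). nra.
  - pose proof (pow2_ge_0 ((E - 1) / 2 - v0 * (E + 1) / 2)). nra.
Qed.

Lemma B0norm_omega0_eq (v0 w0 : R) : 0 < v0 ->
  B0norm_omega0 v0 w0 = 2 * Rabs w0 / ((1 + v0) * Rmin 1 v0).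
Proof.
  intros Hv0. unfold B0norm_omega0.
  unfold Rdiv at 2. rewrite Rabs_mult, Rabs_inv, (Rabs_pos_eq (1 + v0)) by lra.
  destruct (Rle_lt_dec 1 v0).
  - rewrite Rmin_left, (Rabs_left1 (1 - v0)) by lra. field. lra.
  - rewrite Rmin_right, (Rabs_pos_eq (1 - v0)) by lra. field. lra.
Qed.

Lemma B0norm_omega0_ge (nu v0 w0 tc E : R) : 0 < nu -> 0 < v0 -> 0 < tc ->
  exp 1 * (nu * tc) <= E -> Rmin 1 v0 * E <= Rabs w0 * tc / (1 + v0) ->
  B0norm_omega0 v0 w0 >= 2 * exp 1 * nu.
Proof.
  intros Hnu Hv0 Htc HE HK. rewrite B0norm_omega0_eq by exact Hv0.
  assert (Hmin : 0 < Rmin 1 v0) by (apply Rmin_pos; lra).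
  replace (2 * Rabs w0 / ((1 + v0) * Rmin 1 v0))
    with (2 * (Rabs w0 * tc / (1 + v0)) / (Rmin 1 v0 * tc))
    by (field; repeat split; lra).
  assert (Rmin 1 v0 * (exp 1 * (nu * tc)) <= Rmin 1 v0 * E)
    by (apply Rmult_le_compat_l; lra).
  apply Rle_ge, (proj1 (Rle_div_r _ _ _ (Rmult_lt_0_compat _ _ Hmin Htc))). lra.
Qed.

Lemma L2norm_omega0_ge (nu v0 w0 tc M X : R) :
  0 <= nu -> 0 < v0 -> 0 < tc -> 0 < M ->
  (nu * tc) ^ 2 <= M * X -> v0 * X <= (Rabs w0 * tc / (1 + v0)) ^ 2 ->
  L2norm_omega0 v0 w0 >= 2 * sqrt PI * nu / sqrt M.
Proof.
  intros Hnu Hv0 Htc HM Hs HK. unfold L2norm_omega0.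
  pose proof PI_RGT_0. pose proof (sqrt_lt_R0 M HM). pose proof (sqrt_pos PI).
  apply Rle_ge. rewrite <- (sqrt_pow2 (2 * sqrt PI * nu / sqrt M))
    by (apply Rle_mult_inv_pos; nra).
  apply sqrt_le_1_alt.
  replace ((2 * sqrt PI * nu / sqrt M) ^ 2) with (4 * sqrt PI ^ 2 * nu ^ 2 / sqrt M ^ 2)
    by (field; lra).
  rewrite !pow2_sqrt by lra.
  rewrite <- (pow2_abs w0).
  set (K := Rabs w0 * tc / (1 + v0)) in HK.
  assert (Hdiff : 4 * PI * Rabs w0 ^ 2 / (v0 * (1 + v0) ^ 2) - 4 * PI * nu ^ 2 / M
                  = 4 * PI * (M * K ^ 2 - nu ^ 2 * v0 * tc ^ 2) / (M * v0 * tc ^ 2))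
    by (unfold K; field; repeat split; lra).
  assert (Hkey : nu ^ 2 * v0 * tc ^ 2 <= M * K ^ 2).
  { assert (v0 * (nu * tc) ^ 2 <= v0 * (M * X)) by (apply Rmult_le_compat_l; lra).
    assert (M * (v0 * X) <= M * K ^ 2) by (apply Rmult_le_compat_l; lra).
    lra. }
  assert (0 <= 4 * PI * (M * K ^ 2 - nu ^ 2 * v0 * tc ^ 2) / (M * v0 * tc ^ 2)).
  { apply Rle_mult_inv_pos; [nra|].
    apply Rmult_lt_0_compat; [nra | apply pow_lt; lra]. }
  lra.
Qed.

Theorem mainTheorem15 (nu v0 w0 M : R) :
  0 < nu -> 0 < v0 -> w0 <> 0 ->
  (forall s, 0 <= s -> M_fun s <= M) ->
  (exists s, 0 <= s /\ M_fun s = M) ->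
  collapses nu v0 w0 ->
  B0norm_omega0 v0 w0 >= 2 * exp 1 * nu /\
  L2norm_omega0 v0 w0 >= 2 * sqrt PI * nu / sqrt M.
Proof.
  intros Hnu Hv0 _ Hmax _ Hcollapse.
  destruct (collapse_amplitude nu v0 w0 Hnu Hv0 Hcollapse) as [tc [Htc HK]].
  assert (HE : 1 <= exp (nu * tc)) by (pose proof (exp_ineq1 (nu * tc)); nra).
  destruct (amplitude_bounds v0 _ _ Hv0 HE HK) as [Hmin Hsq].
  destruct (sq_le_mul_expm1 M Hmax) as [HM Hexp].
  split.
  - apply (B0norm_omega0_ge nu v0 w0 tc (exp (nu * tc))); auto. apply exp_ge_e_mul.
  - apply (L2norm_omega0_ge nu v0 w0 tc M (exp (2 * (nu * tc)) - 1)); try lra.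
    + apply Hexp. nra.
    + rewrite exp_double. exact Hsq.
Qed.
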